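(* Let $a_1,a_2\in\mathbb{R}$ and $C>0$, and let $$R=\begin{pmatrix} 1 & a_1 \\ a_2 & 1 \end{pmatrix},\qquad S=\begin{pmatrix} 1 & Ca_1 \\ a_2/C & 1 \end{pmatrix}.$$ Then the Skorokhod problem with matrix $R$ has a unique solution for every driving function if and only if the Skorokhod problem with matrix $S$ has a unique solution for every driving function.
   Context: For $b=(b_1,b_2)\in\mathbb{R}^2$ write $b\ge 0$ if $b_1\ge 0$ and $b_2\ge 0$, and let $D=\{b\in\mathbb{R}^2: b\ge 0\}$. A driving function is a continuous function $f:[0,\infty)\to\mathbb{R}^2$ with $f(0)\ge 0$. Given a real $2\times 2$ matrix $R$ and a driving function $f$, a solution of the Skorokhod problem is a pair $(g,m)$ where (1) $g:[0,\infty)\to D$ is continuous; (2) $m=(m_1,m_2):[0,\infty)\to\mathbb{R}^2$ is continuous with $m(0)=0$ and each $m_j$ non-decreasing; (3) $g(t)=f(t)+Rm(t)$ for all $t\ge 0$; and (4) for $j=1,2$, $m_j$ increases only when $g_j=0$, i.e. $\int_0^\infty g_j(t)\,dm_j(t)=0$. ''Unique solution'' means there is exactly one such pair $(g,m)$. *)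

From Stdlib Require Import Reals.
Open Scope R_scope.

Record mat2 := Mat2 { r11 : R; r12 : R; r21 : R; r22 : R }.

Definition mulv (M : mat2) (v : R * R) : R * R :=
  (r11 M * fst v + r12 M * snd v, r21 M * fst v + r22 M * snd v).

Definition addv (u v : R * R) : R * R := (fst u + fst v, snd u + snd v).

Definition nonneg2 (b : R * R) : Prop := 0 <= fst b /\ 0 <= snd b.

Definition cont0 (h : R -> R) : Prop :=
  forall t, 0 <= t -> forall eps, 0 < eps -> exists delta, 0 < delta /\
    forall s, 0 <= s -> Rabs (s - t) < delta -> Rabs (h s - h t) < eps.

Definition cont2 (h : R -> R * R) : Prop :=
  cont0 (fun t => fst (h t)) /\ cont0 (fun t => snd (h t)).

Definition nondecr0 (h : R -> R) : Prop :=
  forall s t, 0 <= s -> s <= t -> h s <= h t.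

Definition incr_only_at_zero (h k : R -> R) : Prop :=
  forall s t, 0 <= s -> s <= t -> (forall u, s <= u <= t -> 0 < k u) -> h s = h t.

Definition driving (f : R -> R * R) : Prop := cont2 f /\ nonneg2 (f 0).

(* (g, m) solves the Skorokhod problem for matrix M and driving function f;
   all functions are only considered on [0, +oo). *)
Definition SP_solution (M : mat2) (f g m : R -> R * R) : Prop :=
  cont2 g /\ (forall t, 0 <= t -> nonneg2 (g t)) /\
  cont2 m /\ m 0 = (0, 0) /\
  nondecr0 (fun t => fst (m t)) /\ nondecr0 (fun t => snd (m t)) /\
  (forall t, 0 <= t -> g t = addv (f t) (mulv M (m t))) /\
  incr_only_at_zero (fun t => fst (m t)) (fun t => fst (g t)) /\
  incr_only_at_zero (fun t => snd (m t)) (fun t => snd (g t)).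

Definition SP_unique (M : mat2) (f : R -> R * R) : Prop :=
  (exists g m, SP_solution M f g m) /\
  (forall g m g' m', SP_solution M f g m -> SP_solution M f g' m' ->
     forall t, 0 <= t -> g t = g' t /\ m t = m' t).

(** The diagonal change of variables [D = diag(C, 1)] with [C > 0] preserves
    the orthant, continuity, monotonicity and the complementarity condition,
    and it turns [g = f + R m] into [D g = D f + (D R D^-1) (D m)], where
    [D R D^-1] is the matrix [S] of the statement.  Hence [(g, m)] solves the
    problem for [R] and [f] iff [(D g, D m)] solves it for [S] and [D f]; as
    [f |-> D f] is a bijection of driving functions, uniqueness transfers in
    both directions. *)

From Stdlib Require Import Reals Lra FunctionalExtensionality.
Open Scope R_scope.

Definition scale_fst (c : R) (v : R * R) : R * R := (c * fst v, snd v).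

(* [D M D^-1] for [D = diag(c, 1)]. *)
Definition conj_scale_fst (c : R) (M : mat2) : mat2 :=
  Mat2 (r11 M) (c * r12 M) (r21 M / c) (r22 M).

Lemma scale_fstA (c d : R) (v : R * R) :
  scale_fst c (scale_fst d v) = scale_fst (c * d) v.
Proof. unfold scale_fst; simpl; f_equal; ring. Qed.

Lemma scale_fstVK (c : R) (v : R * R) : c <> 0 ->
  scale_fst (/ c) (scale_fst c v) = v.
Proof.
  intros Hc; rewrite scale_fstA, Rinv_l by exact Hc.
  destruct v; unfold scale_fst; simpl; f_equal; ring.
Qed.

Lemma scale_fstKV (c : R) (v : R * R) : c <> 0 ->
  scale_fst c (scale_fst (/ c) v) = v.
Proof.
  intros Hc; rewrite scale_fstA, Rinv_r by exact Hc.
  destruct v; unfold scale_fst; simpl; f_equal; ring.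
Qed.

Lemma conj_scale_fstVK (c : R) (M : mat2) : c <> 0 ->
  conj_scale_fst (/ c) (conj_scale_fst c M) = M.
Proof. intros Hc; destruct M; unfold conj_scale_fst; simpl; f_equal; field; exact Hc. Qed.

Lemma scale_fst_addv (c : R) (u v : R * R) :
  scale_fst c (addv u v) = addv (scale_fst c u) (scale_fst c v).
Proof. unfold scale_fst, addv; simpl; f_equal; ring. Qed.

Lemma mulv_conj_scale_fst (c : R) (M : mat2) (v : R * R) : c <> 0 ->
  mulv (conj_scale_fst c M) (scale_fst c v) = scale_fst c (mulv M v).
Proof. intros Hc; unfold mulv, scale_fst; simpl; f_equal; field; exact Hc. Qed.

Lemma nonneg2_scale_fst (c : R) (v : R * R) : 0 <= c ->
  nonneg2 v -> nonneg2 (scale_fst c v).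
Proof. intros Hc [H1 H2]; split; simpl; [apply Rmult_le_pos |]; assumption. Qed.

Lemma cont0_scale (c : R) (h : R -> R) : cont0 h -> cont0 (fun t => c * h t).
Proof.
  intros H t Ht eps Heps.
  assert (Hc : 0 < Rabs c + 1) by (pose proof (Rabs_pos c); lra).
  destruct (H t Ht (eps / (Rabs c + 1))) as [delta [Hdelta Hclose]].
  { apply Rdiv_lt_0_compat; assumption. }
  exists delta; split; [exact Hdelta |].
  intros s Hs Hst.
  specialize (Hclose s Hs Hst).
  rewrite <- Rmult_minus_distr_l, Rabs_mult.
  apply Rle_lt_trans with (Rabs c * (eps / (Rabs c + 1))).
  - apply Rmult_le_compat_l; [apply Rabs_pos | lra].
  - apply Rlt_le_trans with ((Rabs c + 1) * (eps / (Rabs c + 1))).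
    + apply Rmult_lt_compat_r; [apply Rdiv_lt_0_compat |]; lra.
    + right; field; lra.
Qed.

Lemma cont2_scale_fst (c : R) (h : R -> R * R) :
  cont2 h -> cont2 (fun t => scale_fst c (h t)).
Proof. intros [H1 H2]; split; [apply cont0_scale |]; assumption. Qed.

Lemma nondecr0_scale (c : R) (h : R -> R) : 0 <= c ->
  nondecr0 h -> nondecr0 (fun t => c * h t).
Proof. intros Hc H s t Hs Hst; apply Rmult_le_compat_l; auto. Qed.

Lemma incr_only_at_zero_scale (c : R) (h k : R -> R) : 0 < c ->
  incr_only_at_zero h k -> incr_only_at_zero (fun t => c * h t) (fun t => c * k t).
Proof.
  intros Hc H s t Hs Hst Hpos; f_equal.
  apply H; [assumption | assumption |].
  intros u Hu; specialize (Hpos u Hu).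
  apply Rmult_lt_reg_l with c; lra.
Qed.

Lemma driving_scale_fst (c : R) (f : R -> R * R) : 0 <= c ->
  driving f -> driving (fun t => scale_fst c (f t)).
Proof.
  intros Hc [Hcont H0]; split;
    [apply cont2_scale_fst | apply nonneg2_scale_fst]; assumption.
Qed.

Lemma SP_solution_scale_fst (c : R) (M : mat2) (f g m : R -> R * R) : 0 < c ->
  SP_solution M f g m ->
  SP_solution (conj_scale_fst c M) (fun t => scale_fst c (f t))
    (fun t => scale_fst c (g t)) (fun t => scale_fst c (m t)).
Proof.
  intros Hc [Hg [Hgpos [Hm [Hm0 [Hmon1 [Hmon2 [Heq [Hcompl1 Hcompl2]]]]]]]].
  repeat split.
  - apply cont2_scale_fst, Hg.
  - apply cont2_scale_fst, Hg.
  - apply nonneg2_scale_fst; [lra | auto].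
  - apply nonneg2_scale_fst; [lra | auto].
  - apply cont2_scale_fst, Hm.
  - apply cont2_scale_fst, Hm.
  - rewrite Hm0; unfold scale_fst; simpl; f_equal; ring.
  - apply nondecr0_scale; [lra | exact Hmon1].
  - exact Hmon2.
  - intros t Ht.
    rewrite Heq, scale_fst_addv, mulv_conj_scale_fst by lra.
    reflexivity.
  - exact (incr_only_at_zero_scale c _ _ Hc Hcompl1).
  - exact Hcompl2.
Qed.

Lemma SP_unique_scale_fst (c : R) (M : mat2) (f : R -> R * R) : 0 < c ->
  SP_unique M f -> SP_unique (conj_scale_fst c M) (fun t => scale_fst c (f t)).
Proof.
  intros Hc [[g [m Hsol]] Huniq]; split.
  - exists (fun t => scale_fst c (g t)), (fun t => scale_fst c (m t)).
    apply SP_solution_scale_fst; assumption.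
  - assert (Hc0 : c <> 0) by lra.
    assert (Hback : forall g' m', SP_solution (conj_scale_fst c M)
                      (fun t => scale_fst c (f t)) g' m' ->
                    SP_solution M f (fun t => scale_fst (/ c) (g' t))
                                    (fun t => scale_fst (/ c) (m' t))).
    { intros g' m' Hsol'.
      pose proof (SP_solution_scale_fst (/ c) _ _ _ _
                    (Rinv_0_lt_compat c Hc) Hsol') as Hsol''.
      cbv beta in Hsol''.
      rewrite conj_scale_fstVK in Hsol'' by exact Hc0.
      replace (fun t => scale_fst (/ c) (scale_fst c (f t))) with f in Hsol''
        by (extensionality t; symmetry; apply scale_fstVK, Hc0).
      exact Hsol''. }
    intros g1 m1 g2 m2 Hsol1 Hsol2 t Ht.
    destruct (Huniq _ _ _ _ (Hback _ _ Hsol1) (Hback _ _ Hsol2) t Ht) as [Eg Em].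
    rewrite <- (scale_fstKV c (g1 t)), <- (scale_fstKV c (m1 t)), Eg, Em
      by exact Hc0.
    split; apply scale_fstKV, Hc0.
Qed.

Lemma SP_unique_all_conj_scale_fst (c : R) (M : mat2) : 0 < c ->
  (forall f, driving f -> SP_unique M f) ->
  (forall f, driving f -> SP_unique (conj_scale_fst c M) f).
Proof.
  intros Hc H f Hf.
  replace f with (fun t => scale_fst c (scale_fst (/ c) (f t)))
    by (extensionality t; apply scale_fstKV; lra).
  apply SP_unique_scale_fst, H, driving_scale_fst; [exact Hc | | exact Hf].
  left; apply Rinv_0_lt_compat, Hc.
Qed.

Theorem lemma3p1 (a1 a2 C : R) (hC : 0 < C) :
  (forall f : R -> R * R, driving f -> SP_unique (Mat2 1 a1 a2 1) f) <->
  (forall f : R -> R * R, driving f -> SP_unique (Mat2 1 (C * a1) (a2 / C) 1) f).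
Proof.
  change (Mat2 1 (C * a1) (a2 / C) 1) with (conj_scale_fst C (Mat2 1 a1 a2 1)).
  split.
  - apply SP_unique_all_conj_scale_fst, hC.
  - intros H.
    rewrite <- (conj_scale_fstVK C (Mat2 1 a1 a2 1)) by lra.
    apply SP_unique_all_conj_scale_fst; [apply Rinv_0_lt_compat, hC | exact H].
Qed.
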